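(* Let $f : \mathbb{Z}_{\geqslant 1} \to \mathbb{C}$ be an arithmetic function and for real $x \geqslant 1$ set $$S_{r}(x)=\sum_{n_{1}\leqslant x,\dots,n_{r}\leqslant x}\left( f ( n_1 ) + \dotsb + f ( n_r ) \right) \left \lfloor \frac{x}{n_1 \dotsb n_r}\right \rfloor .$$ Define recursively $$T_{1}(x)=\sum_{n \leqslant x} \left \lfloor \frac{x}{n} \right \rfloor (f \star \mathbf{1}) (n), \qquad T_{r}(x) = \sum_{n \leqslant x} T_{r-1} \left( \frac{x}{n} \right) \quad ( r \in \mathbb{Z}_{\geqslant 2} ).$$ Then for every $r \in \mathbb{Z}_{\geqslant 2}$ and every real $x \geqslant 1$, $S_{r}(x)=r\, T_{r-1}(x)$.
   Context: $\lfloor\cdot\rfloor$ is the integer part; sums run over positive integers. $\mathbf{1}$ is the constant function $1$, and $(F \star G)(n) := \sum_{d \mid n} F(d) G(n/d)$ is Dirichlet convolution. *)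

From HB Require Import structures.
From mathcomp Require Import all_boot all_order all_algebra.
From mathcomp Require Import reals.
From mathcomp Require Import complex.
Set Implicit Arguments. Unset Strict Implicit. Unset Printing Implicit Defensive.
Import Order.TTheory GRing.Theory Num.Theory.
Local Open Scope ring_scope.

Section Defs.
Variable R : realType.
Local Notation C := (complex R).

Definition dconv (F G : nat -> C) (n : nat) : C :=
  \sum_(d <- divisors n) F d * G (n %/ d)%N.

Definition one_fn : nat -> C := fun _ => 1.

Definition ipart (x : R) : int := Num.floor x.
Definition nfloor (x : R) : nat := `|Num.floor x|%N.

(* S_r(x) = sum over n_1,...,n_r in [1, floor x] of
   (f n_1 + ... + f n_r) * floor(x / (n_1 ... n_r)).
   The tuple (n_1,...,n_r) is encoded as t : {ffun 'I_r -> 'I_(nfloor x)} with n_i = (t i).+1. *)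
Definition S (f : nat -> C) (r : nat) (x : R) : C :=
  \sum_(t : {ffun 'I_r -> 'I_(nfloor x)})
     (\sum_(i < r) f (t i).+1) *
     (ipart (x / (\prod_(i < r) ((t i).+1)%:R)))%:~R.

Definition T1 (f : nat -> C) (x : R) : C :=
  \sum_(1 <= n < (nfloor x).+1) (ipart (x / n%:R))%:~R * dconv f one_fn n.

(* T_r(x) = \sum_{n <= x} T_{r-1}(x/n) for r >= 2; T 0 is an unused dummy value 0 *)
Fixpoint T (f : nat -> C) (r : nat) (x : R) {struct r} : C :=
  match r with
  | 0 => 0
  | r'.+1 =>
    match r' with
    | 0 => T1 f x
    | _ => \sum_(1 <= n < (nfloor x).+1) T f r' (x / n%:R)
    end
  end.
End Defs.

(* Since floor(x/n) = floor(floor(x)/n) for integers n >= 1, everything depends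
   only on M = floor x.  S_r is symmetric in n_1, ..., n_r, so it is r times the
   sum in which only f(n_1) is kept; summing out n_2, ..., n_r there leaves
   sum_(a <= M) f(a) D_r(M/a), where D_r(N) counts the r-tuples of positive
   integers with product at most N.  The sums U_k(M) = sum_(a <= M) f(a) D_(k+1)(M/a)
   obey the recursion of T_k, because D_(k+1)(N) = sum_(n <= N) D_k(N/n) and
   floor(floor(M/a)/n) = floor(M/(a n)); and U_1 = T_1 once the sum over n is
   exchanged with the sum over the divisors of n. *)

From HB Require Import structures.
From mathcomp Require Import all_boot all_order all_algebra.
From mathcomp Require Import reals.
From mathcomp Require Import complex.
From mathcomp Require Import perm.
Set Implicit Arguments. Unset Strict Implicit. Unset Printing Implicit Defensive.
Import Order.TTheory GRing.Theory Num.Theory.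
Local Open Scope ring_scope.

Section BigWiden.
Variables (R : Type) (idx : R) (op : Monoid.law idx).

Lemma big_ord_widen_idx (F : nat -> R) L K :
  (L <= K)%N -> (forall a, (L <= a)%N -> F a = idx) ->
  \big[op/idx]_(a < L) F a = \big[op/idx]_(a < K) F a.
Proof.
move=> LK F0; rewrite (big_ord_widen _ _ LK) big_mkcond /=.
by apply: eq_bigr => a _; case: ltnP => // /F0.
Qed.

Lemma big_ord_divn_widen (F : nat -> nat -> R) L K :
  (L <= K)%N -> (forall a, F a 0%N = idx) ->
  \big[op/idx]_(a < L) F a (L %/ a.+1)%N = \big[op/idx]_(a < K) F a (L %/ a.+1)%N.
Proof.
move=> LK F0; apply: (big_ord_widen_idx (F := fun a => F a (L %/ a.+1)%N)) => // a La.
by rewrite divn_small ?F0 // ltnS.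
Qed.

End BigWiden.

Section FfunCons.
Variables (K r : nat).

Definition ffun_cons (a : 'I_K) (u : {ffun 'I_r -> 'I_K}) : {ffun 'I_r.+1 -> 'I_K} :=
  [ffun j => if unlift ord0 j is Some k then u k else a].

Lemma ffun_cons0 a u : ffun_cons a u ord0 = a.
Proof. by rewrite ffunE unlift_none. Qed.

Lemma ffun_cons_lift a u k : ffun_cons a u (lift ord0 k) = u k.
Proof. by rewrite ffunE liftK. Qed.

Lemma big_ffunS (R : Type) (idx : R) (op : Monoid.com_law idx)
    (F : {ffun 'I_r.+1 -> 'I_K} -> R) :
  \big[op/idx]_t F t = \big[op/idx]_(a : 'I_K) \big[op/idx]_u F (ffun_cons a u).
Proof.
rewrite pair_big (reindex (fun p => ffun_cons p.1 p.2)) //=.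
exists (fun t => (t ord0, [ffun k => t (lift ord0 k)])) => [[a u] _ | t _] /=.
  by rewrite ffun_cons0; congr pair; apply/ffunP => k; rewrite ffunE ffun_cons_lift.
apply/ffunP => j; rewrite ffunE.
by case: unliftP => [k ->|->] //; rewrite ffunE.
Qed.

Lemma prod_ffun_cons a u :
  (\prod_(i < r.+1) (ffun_cons a u i).+1 = a.+1 * \prod_(i < r) (u i).+1)%N.
Proof.
by rewrite big_ord_recl ffun_cons0; under eq_bigr do rewrite ffun_cons_lift.
Qed.

End FfunCons.

Lemma sum_ffun_coord_tperm (V : nmodType) K r (F : 'I_K -> nat -> V)
    (G : 'I_K -> nat) (i i' : 'I_r) :
  \sum_(t : {ffun 'I_r -> 'I_K}) F (t i) (\prod_j G (t j))%N
  = \sum_(t : {ffun 'I_r -> 'I_K}) F (t i') (\prod_j G (t j))%N.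
Proof.
pose swap (t : {ffun 'I_r -> 'I_K}) := [ffun j => t (tperm i i' j)].
have swapK : involutive swap by move=> t; apply/ffunP => j; rewrite !ffunE tpermK.
rewrite (reindex swap); last by exists swap.
apply: eq_bigr => t _; rewrite ffunE tpermL; congr (F _ _).
rewrite [RHS](reindex_inj (@perm_inj _ (tperm i i'))).
by apply: eq_bigr => j _; rewrite ffunE.
Qed.

(* [Dsum k N] is D_(k+1)(N). *)
Fixpoint Dsum (k N : nat) : nat :=
  if k is k'.+1 then (\sum_(n < N) Dsum k' (N %/ n.+1))%N else N.

Lemma Dsum0 k : Dsum k 0 = 0%N.
Proof. by case: k => [|k] //=; rewrite big_ord0. Qed.

Lemma sum_ffun_divn_prod r K M : (M <= K)%N ->
  (\sum_(t : {ffun 'I_r -> 'I_K}) M %/ \prod_(i < r) (t i).+1)%N = Dsum r M.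
Proof.
elim: r M => [|r IH] M MK /=.
  under eq_bigr do rewrite big_ord0 divn1.
  by rewrite sum_nat_const card_ffun !card_ord mul1n.
rewrite big_ffunS (big_ord_divn_widen (F := fun _ => Dsum r) _ MK); last first.
  by move=> a; apply: Dsum0.
apply: eq_bigr => a _; rewrite -(IH _ (leq_trans (leq_div _ _) MK)).
by apply: eq_bigr => u _; rewrite prod_ffun_cons divnMA.
Qed.

Lemma divisors_perm_filter_iota n M : (0 < n <= M)%N ->
  perm_eq (divisors n) [seq d <- index_iota 1 M.+1 | (d %| n)%N].
Proof.
move=> /andP[n0 nM]; apply: uniq_perm; rewrite ?filter_uniq ?iota_uniq ?divisors_uniq //.
move=> d; rewrite mem_filter mem_index_iota -dvdn_divisors //.
case dn: (d %| n)%N => //=.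
by rewrite (dvdn_gt0 n0 dn) ltnS (leq_trans (dvdn_leq n0 dn) nM).
Qed.

Section Tnat.
Variables (V : nmodType) (f : nat -> V).

Definition Tnat k M := \sum_(a < M) f a.+1 *+ Dsum k (M %/ a.+1).

Lemma sum_ffun_head_divn_prod r K M : (M <= K)%N ->
  \sum_(t : {ffun 'I_r.+1 -> 'I_K}) f (t ord0).+1 *+ (M %/ \prod_(i < r.+1) (t i).+1)
  = Tnat r M.
Proof.
move=> MK; rewrite big_ffunS /Tnat.
rewrite (big_ord_divn_widen (F := fun a m => f a.+1 *+ Dsum r m) _ MK) ?Dsum0 //.
apply: eq_bigr => a _; rewrite -(sum_ffun_divn_prod r (leq_trans (leq_div _ _) MK)).
rewrite -sumrMnr; apply: eq_bigr => u _.
by rewrite ffun_cons0 prod_ffun_cons divnMA.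
Qed.

Lemma sum_ffun_divn_prod_sym r M :
  \sum_(t : {ffun 'I_r.+1 -> 'I_M})
     (\sum_(i < r.+1) f (t i).+1) *+ (M %/ \prod_(i < r.+1) (t i).+1)
  = Tnat r M *+ r.+1.
Proof.
under eq_bigr do rewrite -sumrMnl.
rewrite exchange_big /= -[r.+1 in RHS]card_ord -sumr_const; apply: eq_bigr => i _.
rewrite (sum_ffun_coord_tperm (fun a P => f a.+1 *+ (M %/ P)) (fun a => a.+1) i ord0).
exact: sum_ffun_head_divn_prod.
Qed.

Lemma TnatS r M : Tnat r.+1 M = \sum_(1 <= n < M.+1) Tnat r (M %/ n).
Proof.
rewrite big_add1 /= big_mkord /Tnat.
have DsumS a : Dsum r.+1 (M %/ a.+1) = (\sum_(n < M) Dsum r (M %/ a.+1 %/ n.+1))%N.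
  rewrite /= (big_ord_divn_widen (F := fun _ => Dsum r) _ (leq_div _ _)) //.
  by move=> n; apply: Dsum0.
under eq_bigr do rewrite DsumS -sumrMnr.
rewrite exchange_big /=; apply: eq_bigr => n _.
rewrite (big_ord_divn_widen (F := fun a m => f a.+1 *+ Dsum r m) _ (leq_div _ _)) ?Dsum0 //.
by apply: eq_bigr => a _; rewrite -!divnMA mulnC.
Qed.

Lemma sum_nat_dvdn (g : nat -> V) d M : (0 < d)%N ->
  \sum_(1 <= n < M.+1 | (d %| n)%N) g n = \sum_(i < (M %/ d)%N) g (d * i.+1)%N.
Proof.
move=> d0; elim: M => [|M IH]; first by rewrite big_geq // div0n big_ord0.
rewrite big_mkcond big_nat_recr //= -big_mkcond IH divnS //.
case: ifP => dM /=; last by rewrite addr0 add0n.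
rewrite add1n big_ord_recr /=; congr (_ + g _).
by have := divnK dM; rewrite divnS // dM add1n mulnC.
Qed.

Lemma Tnat1 M :
  Tnat 1 M = \sum_(1 <= n < M.+1) (\sum_(d <- divisors n) f d) *+ (M %/ n).
Proof.
have -> : \sum_(1 <= n < M.+1) (\sum_(d <- divisors n) f d) *+ (M %/ n)
        = \sum_(1 <= n < M.+1) \sum_(1 <= d < M.+1 | (d %| n)%N) f d *+ (M %/ n).
  apply: eq_big_nat => n nM.
  by rewrite (perm_big _ (divisors_perm_filter_iota nM)) big_filter sumrMnl.
rewrite (exchange_big_dep_nat xpredT) //= big_add1 big_mkord.
apply: eq_bigr => a _; rewrite sum_nat_dvdn // /= -sumrMnr.
by apply: eq_bigr => i _; rewrite divnMA.
Qed.

End Tnat.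

Section Floor.
Variable R : realType.

Lemma floor_nfloor (x : R) : 0 <= x -> Num.floor x = (nfloor x)%:Z.
Proof. by move=> x0; rewrite /nfloor gez0_abs // floor_ge0. Qed.

Lemma floor_divn (x : R) n : 0 <= x -> (0 < n)%N ->
  Num.floor (x / n%:R) = (nfloor x %/ n)%:Z.
Proof.
move=> x0 n0; apply: floor_def.
have n0R : 0 < n%:R :> R by rewrite ltr0n.
have Nx : (nfloor x)%:R <= x by have := floor_le x; rewrite floor_nfloor // -pmulrn.
have xN : x < (nfloor x).+1%:R.
  by have := floorD1_gt x; rewrite floor_nfloor // -natr1 rmorphD /= -pmulrn.
rewrite ler_pdivlMr // ltr_pdivrMr // rmorphD /= -pmulrn natr1 -!natrM.
apply/andP; split; first by apply: le_trans Nx; rewrite ler_nat leq_divM.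
by apply: lt_le_trans xN _; rewrite ler_nat ltn_ceil.
Qed.

Lemma nfloor_divn (x : R) n : 0 <= x -> (0 < n)%N ->
  nfloor (x / n%:R) = (nfloor x %/ n)%N.
Proof. by move=> x0 n0; rewrite {1}/nfloor floor_divn. Qed.

Lemma ipart_divn (x : R) n : 0 <= x -> (0 < n)%N ->
  (ipart (x / n%:R))%:~R = (nfloor x %/ n)%:R :> complex R.
Proof. by move=> x0 n0; rewrite /ipart floor_divn // -pmulrn. Qed.

Variable f : nat -> complex R.

Lemma TSS r (x : R) :
  T f r.+2 x = \sum_(1 <= n < (nfloor x).+1) T f r.+1 (x / n%:R).
Proof. by []. Qed.

Lemma T_Tnat r (x : R) : 0 <= x -> T f r.+1 x = Tnat f r.+1 (nfloor x).
Proof.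
elim: r x => [|r IH] x x0.
  rewrite Tnat1 /= /T1; apply: eq_big_nat => n /andP[n0 _].
  rewrite ipart_divn // mulr_natl; congr (_ *+ _).
  by apply: eq_bigr => d _; rewrite /one_fn mulr1.
rewrite TSS TnatS; apply: eq_big_nat => n /andP[n0 _].
by rewrite IH ?nfloor_divn // divr_ge0 // ler0n.
Qed.

Lemma S_Tnat r (x : R) : 0 <= x -> S f r.+1 x = Tnat f r (nfloor x) *+ r.+1.
Proof.
move=> x0; rewrite /S -sum_ffun_divn_prod_sym; apply: eq_bigr => t _.
by rewrite -natr_prod ipart_divn ?prodn_gt0 // mulr_natr.
Qed.

End Floor.

Theorem theorem5p1 (R : realType) (f : nat -> complex R) (r : nat) (x : R) :
  (2 <= r)%N -> 1 <= x ->
  S f r x = r%:R * T f r.-1 x.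
Proof.
case: r => [|[|r]] // _ x1.
have x0 : 0 <= x by apply: le_trans x1.
by rewrite S_Tnat // T_Tnat // mulr_natl.
Qed.
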